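(* Let $\Pi = R_{gen} \cup R_{pref}$ be a fuzzy answer set optimization program, $\Pi^e = R^e_{gen} \cup R^e_{pref}$ be the fuzzy answer set program translation of $\Pi$, $r$ be a fuzzy preference rule in $R_{pref}$, $C_i$ be a boolean combination in the head of $r$, $I$ be a fuzzy answer set of $\Pi$, and $I'$ be a fuzzy answer set of $\Pi^e$ that corresponds to $I$. Then, (1) $I \models_{i} r$ iff $I' \models sat(r, i):1$; (2) $I \models_{irr} r$ iff $I' \models sat(r, irr):1$.
   Context: A fuzzy annotated literal is $l:\mu$ with $l$ a literal (atom or classically negated atom) and $\mu$ a fuzzy annotation in $[0,1]$. A fuzzy answer set optimization program is $\Pi = R_{gen} \cup R_{pref}$, where $R_{gen}$ is a set of fuzzy logic rules under fuzzy answer set semantics (the generator rules) and $R_{pref}$ is a set of fuzzy preference rules, each of the form $r:\; C_1 \succ C_2 \succ \ldots \succ C_k \leftarrow l_{k+1}:\mu_{k+1},\ldots, l_m:\mu_m, not\; l_{m+1}:\mu_{m+1},\ldots, not\;l_n:\mu_n$, where $body(r)$ is the right-hand side and each $C_i$ is a boolean combination (built with $\wedge$, $\vee$, and $not$ applied only to fuzzy annotated literals), written in generalized fuzzy annotated DNF $C_i = (s_{1,1}:\mu_{1,1} \land \ldots \land s_{1,t_1}:\mu_{1,t_1}) \vee \ldots \vee (s_{u,1}:\mu_{u,1} \land \ldots \land s_{u,t_u}:\mu_{u,t_u})$, each $s_{v,w}:\mu_{v,w}$ a fuzzy annotated literal possibly preceded by $not$. Satisfaction by a (possibly partial) fuzzy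 answer set $I$: $I \models l:\mu$ iff $\mu \leq I(l)$; $I \models not\; l:\mu$ iff $\mu \nleq I(l)$ or $l$ is undefined in $I$; $I \models C \wedge C'$ iff both hold; $I \models C \vee C'$ iff either holds; $I \models body(r)$ iff $I$ satisfies every (possibly $not$-preceded) annotated literal in the body. Then $I \models_i r$ iff $I \models body(r)$ and $I \models C_i$; $I \models_{irr} r$ iff either $I \models body(r)$ and $I$ satisfies no $C_i$ in $head(r)$, or $I$ does not satisfy $body(r)$. The translation $\Pi^e$: $R^e_{gen} = R_{gen}$, and $R^e_{pref}$ consists of the following extended fuzzy logic rules (single annotated literal in the head; answer sets may be partial mappings), with $sat(r,i)$ a predicate meaning $C_i$ of $r$ is satisfied: for each $r \in R_{pref}$, $body(r):1 \leftarrow l_{k+1}:\mu_{k+1},\ldots, l_m:\mu_m, not\; l_{m+1}:\mu_{m+1},\ldots, not\;l_n:\mu_n$; for each $C_i$ in $head(r)$ and each disjunct $v$ ($1\le v\le u$), $sat(r,i):1 \leftarrow s_{v,1}:\mu_{v,1},\ldots, s_{v,t_v}:\mu_{v,t_v}, body(r):1$; and for each $r$, $sat(r,irr):1 \leftarrow not\; body(r):1$ and $sat(r,irr):1 \leftarrow not\; sat(r,1):1,\ldots, not\; sat(r,k):1, body(r):1$. The fuzzy answer sets of $\Pi$ are in one-to-one correspondence with those of $\Pi^e$. *)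

From Stdlib Require Import Reals List.
Import ListNotations.
Open Scope R_scope.

(** Literals: an atom or a classically negated atom. *)
Inductive lit (A : Type) : Type :=
| Pos (a : A)
| Neg (a : A).
Arguments Pos {A} a.
Arguments Neg {A} a.

(** A fuzzy annotated literal [l:mu], possibly preceded by default negation [not]. *)
Inductive blit (A : Type) : Type :=
| BL (l : lit A) (mu : R)
| NotL (l : lit A) (mu : R).
Arguments BL {A} l mu.
Arguments NotL {A} l mu.

Definition finterp (A : Type) := lit A -> option R.

Definition fuzzy_interp {A : Type} (I : finterp A) : Prop :=
  forall l v, I l = Some v -> 0 <= v <= 1.

Definition sat_al {A : Type} (I : finterp A) (l : lit A) (mu : R) : Prop :=
  exists v, I l = Some v /\ mu <= v.

Definition sat_nal {A : Type} (I : finterp A) (l : lit A) (mu : R) : Prop :=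
  match I l with
  | None => True
  | Some v => ~ (mu <= v)
  end.

Definition sat_blit {A : Type} (I : finterp A) (b : blit A) : Prop :=
  match b with
  | BL l mu => sat_al I l mu
  | NotL l mu => sat_nal I l mu
  end.

Definition sat_conj {A : Type} (I : finterp A) (c : list (blit A)) : Prop :=
  Forall (sat_blit I) c.

(** Boolean combination in generalized fuzzy annotated DNF: a disjunction
    (list) of conjunctions (lists) of possibly not-preceded annotated literals. *)
Definition dnf (A : Type) := list (list (blit A)).

Definition sat_dnf {A : Type} (I : finterp A) (C : dnf A) : Prop :=
  Exists (sat_conj I) C.

Record frule (A : Type) : Type := mkFrule {
  fhead : lit A * R;
  fbody : list (blit A) }.
Arguments mkFrule {A} fhead fbody.
Arguments fhead {A} f.
Arguments fbody {A} f.

Definition sat_rule {A : Type} (I : finterp A) (r : frule A) : Prop :=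
  sat_conj I (fbody r) -> sat_al I (fst (fhead r)) (snd (fhead r)).

Definition model {A : Type} (P : frule A -> Prop) (I : finterp A) : Prop :=
  forall r, P r -> sat_rule I r.

Definition le_interp {A : Type} (I J : finterp A) : Prop :=
  forall l v, I l = Some v -> exists w, J l = Some w /\ v <= w.

(** Gelfond-Lifschitz style reduct P^I: delete every rule having some
    [not l:mu] in its body with I |= l:mu (i.e. I does not satisfy not l:mu),
    and delete all [not]-literals from the remaining rules. *)
Definition pos_part {A : Type} (b : list (blit A)) : list (blit A) :=
  filter (fun x => match x with BL _ _ => true | NotL _ _ => false end) b.

Definition neg_ok {A : Type} (I : finterp A) (b : list (blit A)) : Prop :=
  Forall (fun x => match x with NotL l mu => sat_nal I l mu | BL _ _ => True end) b.

Definition reduct {A : Type} (P : list (frule A)) (I : finterp A) : frule A -> Prop :=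
  fun r' => exists r, In r P /\ neg_ok I (fbody r) /\
                      r' = mkFrule (fhead r) (pos_part (fbody r)).

Definition fuzzy_answer_set {A : Type} (P : list (frule A)) (I : finterp A) : Prop :=
  fuzzy_interp I /\ model (reduct P I) I /\
  (forall J, fuzzy_interp J -> model (reduct P I) J -> le_interp J I -> le_interp I J).

(** Fuzzy preference rules  C_1 > ... > C_k <- body.
    [phead r] is the list [C_1; ...; C_k]; C_i is [nth (i-1) (phead r) []]. *)
Record prule (A : Type) : Type := mkPrule {
  phead : list (dnf A);
  pbody : list (blit A) }.
Arguments mkPrule {A} phead pbody.
Arguments phead {A} p.
Arguments pbody {A} p.

(** I |=_i r  (0-based index i, i.e. C_{i+1} in the paper's numbering). *)
Definition pref_sat_i {A : Type} (I : finterp A) (r : prule A) (i : nat) : Prop :=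
  sat_conj I (pbody r) /\ sat_dnf I (nth i (phead r) []).

Definition pref_sat_irr {A : Type} (I : finterp A) (r : prule A) : Prop :=
  (sat_conj I (pbody r) /\
     (forall i, (i < length (phead r))%nat -> ~ sat_dnf I (nth i (phead r) [])))
  \/ ~ sat_conj I (pbody r).

Definition fuzzy_answer_set_opt {A : Type} (Rgen : list (frule A))
  (Rpref : list (prule A)) (I : finterp A) : Prop :=
  fuzzy_answer_set Rgen I.

Definition wf_annot (mu : R) : Prop := 0 <= mu <= 1.
Definition wf_blit {A : Type} (b : blit A) : Prop :=
  match b with BL _ mu => wf_annot mu | NotL _ mu => wf_annot mu end.
Definition wf_frule {A : Type} (r : frule A) : Prop :=
  wf_annot (snd (fhead r)) /\ Forall wf_blit (fbody r).
Definition wf_prule {A : Type} (r : prule A) : Prop :=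
  Forall (Forall (Forall wf_blit)) (phead r) /\ Forall wf_blit (pbody r).
Definition wf_program {A : Type} (Rgen : list (frule A)) (Rpref : list (prule A)) : Prop :=
  Forall wf_frule Rgen /\ Forall wf_prule Rpref.

(** Atoms of the translation Pi^e: original atoms plus the fresh atoms
    body(r), sat(r,i), sat(r,irr); a preference rule r is identified by its
    (0-based) position j in R_pref. *)
Inductive eatom (A : Type) : Type :=
| Orig (a : A)
| BodyA (j : nat)
| SatA (j i : nat)
| SatIrr (j : nat).
Arguments Orig {A} a.
Arguments BodyA {A} j.
Arguments SatA {A} j i.
Arguments SatIrr {A} j.

Definition lift_lit {A : Type} (l : lit A) : lit (eatom A) :=
  match l with Pos a => Pos (Orig a) | Neg a => Neg (Orig a) end.

Definition lift_blit {A : Type} (b : blit A) : blit (eatom A) :=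
  match b with BL l mu => BL (lift_lit l) mu | NotL l mu => NotL (lift_lit l) mu end.

Definition lift_frule {A : Type} (r : frule A) : frule (eatom A) :=
  mkFrule (lift_lit (fst (fhead r)), snd (fhead r)) (map lift_blit (fbody r)).

Definition trans_pref {A : Type} (j : nat) (r : prule A) : list (frule (eatom A)) :=
  mkFrule (Pos (BodyA j), 1) (map lift_blit (pbody r))
  ::
  (* sat(r,i):1 <- s_{v,1}:mu_{v,1}, ..., s_{v,t_v}:mu_{v,t_v}, body(r):1 *)
  flat_map (fun iC : nat * dnf A =>
              map (fun conj => mkFrule (Pos (SatA j (fst iC)), 1)
                                       (map lift_blit conj ++ [BL (Pos (BodyA j)) 1]))
                  (snd iC))
           (combine (seq 0 (length (phead r))) (phead r))
  ++
  [
    mkFrule (Pos (SatIrr j), 1) [NotL (Pos (BodyA j)) 1];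
    mkFrule (Pos (SatIrr j), 1)
            (map (fun i => NotL (Pos (SatA j i)) 1) (seq 0 (length (phead r)))
               ++ [BL (Pos (BodyA j)) 1]) ].

Definition translate {A : Type} (Rgen : list (frule A)) (Rpref : list (prule A))
  : list (frule (eatom A)) :=
  map lift_frule Rgen ++
  flat_map (fun jr : nat * prule A => trans_pref (fst jr) (snd jr))
           (combine (seq 0 (length Rpref)) Rpref).

Definition corresponds {A : Type} (I : finterp A) (I' : finterp (eatom A)) : Prop :=
  forall l, I' (lift_lit l) = I l.

From Stdlib Require Import Reals List Lia Classical ClassicalEpsilon.
Import ListNotations.
Open Scope R_scope.

(* In a fuzzy answer set every defined literal is supported: some rule with
   that head has a body satisfied by the answer set, for otherwise deleting
   the literal would give a smaller model of the reduct.  Each fresh atom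
   body(r), sat(r,i), sat(r,irr) of the translation is defined only by its
   own rules, all with head annotation 1, so it holds with degree 1 exactly
   when the body of one of its rules does; unfolding those bodies, and using
   that the answer sets agree on the original literals, gives both claims. *)

Lemma in_combine_seq {B : Type} (l : list B) k a b :
  In (a, b) (combine (seq k (length l)) l) <->
  exists n, a = (k + n)%nat /\ nth_error l n = Some b.
Proof.
  revert k; induction l as [|x l IH]; intros k; simpl.
  - split; [contradiction|]. intros [[|n] [_ Hn]]; discriminate.
  - rewrite IH. split.
    + intros [Hx|[n [-> Hn]]].
      * injection Hx as <- <-. exists 0%nat. split; [lia|reflexivity].
      * exists (S n). split; [lia|exact Hn].
    + intros [[|n] [-> Hn]]; simpl in Hn.
      * injection Hn as <-. left. f_equal. lia.
      * right. exists n. split; [lia|exact Hn].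
Qed.

Lemma in_combine_seq0 {B : Type} (l : list B) n b :
  In (n, b) (combine (seq 0 (length l)) l) <-> nth_error l n = Some b.
Proof.
  rewrite in_combine_seq. split; [intros [m [-> Hm]]; exact Hm|].
  intros Hn. exists n. auto.
Qed.

Lemma sat_nal_iff {X : Type} (J : finterp X) l mu :
  sat_nal J l mu <-> ~ sat_al J l mu.
Proof.
  unfold sat_nal, sat_al. destruct (J l) as [v|]; split.
  - intros Hnle [w [Hw Hle]]. injection Hw as <-. auto.
  - intros Hn Hle. apply Hn. eauto.
  - intros _ [w [Hw _]]. discriminate.
  - auto.
Qed.

Lemma sat_conj_app {X : Type} (J : finterp X) b c :
  sat_conj J (b ++ c) <-> sat_conj J b /\ sat_conj J c.
Proof. apply Forall_app. Qed.

Lemma sat_conj_singleton {X : Type} (J : finterp X) x :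
  sat_conj J [x] <-> sat_blit J x.
Proof.
  unfold sat_conj. split; [now inversion 1|]. intros Hx. now constructor.
Qed.

Lemma sat_conj_map_NotL {X I : Type} (J : finterp X) (f : I -> lit X) mu ks :
  sat_conj J (map (fun k => NotL (f k) mu) ks) <->
  forall k, In k ks -> ~ sat_al J (f k) mu.
Proof.
  unfold sat_conj. rewrite Forall_map, Forall_forall.
  split; intros H k Hk; apply sat_nal_iff, H, Hk.
Qed.

Lemma sat_al_mono {X : Type} (K J : finterp X) l mu :
  le_interp K J -> sat_al K l mu -> sat_al J l mu.
Proof.
  intros HKJ [v [Hv Hle]]. destruct (HKJ l v Hv) as [w [Hw Hvw]].
  exists w. split; [exact Hw|]. now apply Rle_trans with v.
Qed.

Lemma sat_pos_part_mono {X : Type} (K J : finterp X) b :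
  le_interp K J -> sat_conj K (pos_part b) -> sat_conj J (pos_part b).
Proof.
  intros HKJ. unfold sat_conj. induction b as [|[l mu|l mu] b IH]; simpl; auto.
  intros Hb. inversion Hb; subst. constructor; [|auto].
  now apply sat_al_mono with K.
Qed.

Lemma sat_conj_pos_neg {X : Type} (J : finterp X) b :
  sat_conj J b <-> sat_conj J (pos_part b) /\ neg_ok J b.
Proof.
  unfold sat_conj, neg_ok. induction b as [|[l mu|l mu] b IH]; simpl.
  - split; [split; constructor|constructor].
  - rewrite !Forall_cons_iff, IH. simpl. tauto.
  - rewrite !Forall_cons_iff, IH. simpl. tauto.
Qed.

Section AnswerSet.

Variables (X : Type) (P : list (frule X)) (J : finterp X).
Hypothesis HJ : fuzzy_answer_set P J.

Lemma answer_set_rule_fires x :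
  In x P -> sat_conj J (fbody x) -> sat_al J (fst (fhead x)) (snd (fhead x)).
Proof.
  intros Hx Hbody. apply sat_conj_pos_neg in Hbody as [Hpos Hneg].
  destruct HJ as [_ [Hmodel _]].
  apply (Hmodel (mkFrule (fhead x) (pos_part (fbody x)))); [|exact Hpos].
  exists x. auto.
Qed.

Lemma answer_set_supported l :
  J l <> None -> exists x, In x P /\ fst (fhead x) = l /\ sat_conj J (fbody x).
Proof.
  intros Hdef. apply NNPP. intros Hunsup.
  destruct HJ as [Hfuzzy [Hmodel Hmin]].
  set (K := fun l' => if excluded_middle_informative (l' = l) then None else J l').
  assert (HKJ : le_interp K J).
  { intros l' v. unfold K. destruct excluded_middle_informative; [discriminate|].
    intros Hv. exists v. split; [exact Hv|apply Rle_refl]. }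
  assert (HKfuzzy : fuzzy_interp K).
  { intros l' v Hv. unfold K in Hv. destruct excluded_middle_informative; [discriminate|].
    exact (Hfuzzy l' v Hv). }
  assert (HKmodel : model (reduct P J) K).
  { intros r' [x [Hx [Hneg ->]]] Hpos. simpl in *.
    assert (Hbody : sat_conj J (fbody x)).
    { apply sat_conj_pos_neg. split; [|exact Hneg].
      now apply sat_pos_part_mono with K. }
    destruct (Hmodel (mkFrule (fhead x) (pos_part (fbody x))))
      as [v [Hv Hle]]; [exists x; auto|now apply sat_pos_part_mono with K|].
    exists v. split; [|exact Hle]. simpl in Hv.
    unfold K. destruct excluded_middle_informative as [Heq|]; [|exact Hv].
    exfalso. apply Hunsup. eauto. }
  destruct (J l) as [v|] eqn:Hl; [|contradiction].
  destruct (Hmin K HKfuzzy HKmodel HKJ l v Hl) as [w [Hw _]].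
  unfold K in Hw. destruct excluded_middle_informative; [discriminate|contradiction].
Qed.

Lemma answer_set_head_iff l mu (defs : frule X -> Prop) :
  (forall x, In x P /\ fst (fhead x) = l <-> defs x) ->
  (forall x, defs x -> snd (fhead x) = mu) ->
  sat_al J l mu <-> exists x, defs x /\ sat_conj J (fbody x).
Proof.
  intros Hdefs Hmu. split.
  - intros [v [Hv _]].
    destruct (answer_set_supported l) as [x [Hx [Hhead Hbody]]]; [congruence|].
    exists x. split; [now apply Hdefs|exact Hbody].
  - intros [x [Hx Hbody]]. apply Hdefs in Hx as Hx'. destruct Hx' as [HxP Hhead].
    rewrite <- Hhead, <- (Hmu x Hx). now apply answer_set_rule_fires.
Qed.

End AnswerSet.

Definition body_rule {A : Type} (j : nat) (r : prule A) : frule (eatom A) :=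
  mkFrule (Pos (BodyA j), 1) (map lift_blit (pbody r)).

Definition sat_rule {A : Type} (j i : nat) (c : list (blit A)) : frule (eatom A) :=
  mkFrule (Pos (SatA j i), 1) (map lift_blit c ++ [BL (Pos (BodyA j)) 1]).

Definition irr_inapplicable_rule {A : Type} (j : nat) : frule (eatom A) :=
  mkFrule (Pos (SatIrr j), 1) [NotL (Pos (BodyA j)) 1].

Definition irr_unsatisfied_rule {A : Type} (j k : nat) : frule (eatom A) :=
  mkFrule (Pos (SatIrr j), 1)
          (map (fun i => NotL (Pos (SatA j i)) 1) (seq 0 k) ++ [BL (Pos (BodyA j)) 1]).

Lemma in_trans_pref {A : Type} j (r : prule A) x :
  In x (trans_pref j r) <->
  x = body_rule j r \/
  (exists i C c, nth_error (phead r) i = Some C /\ In c C /\ x = sat_rule j i c) \/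
  x = irr_inapplicable_rule j \/
  x = irr_unsatisfied_rule j (length (phead r)).
Proof.
  unfold trans_pref. simpl. rewrite in_app_iff, in_flat_map. simpl.
  split.
  - intros [Hx|[[[i C] [HiC Hx]]|[Hx|[Hx|[]]]]]; auto.
    right; left. apply in_combine_seq0 in HiC. apply in_map_iff in Hx.
    destruct Hx as [c [<- Hc]]. exists i, C, c. auto.
  - intros [Hx|[[i [C [c [HiC [Hc ->]]]]]|[Hx|Hx]]]; auto.
    right; left. exists (i, C). split; [now apply in_combine_seq0|].
    apply in_map_iff. exists c. auto.
Qed.

Lemma in_translate {A : Type} Rgen (Rpref : list (prule A)) x :
  In x (translate Rgen Rpref) <->
  (exists g, In g Rgen /\ x = lift_frule g) \/
  exists j r, nth_error Rpref j = Some r /\ In x (trans_pref j r).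
Proof.
  unfold translate. rewrite in_app_iff, in_map_iff, in_flat_map.
  split.
  - intros [[g [<- Hg]]|[[j r] [Hjr Hx]]]; [left; eauto|right].
    apply in_combine_seq0 in Hjr. eauto.
  - intros [[g [Hg ->]]|[j [r [Hjr Hx]]]]; [left; eauto|right].
    exists (j, r). split; [now apply in_combine_seq0|exact Hx].
Qed.

Lemma lift_lit_Pos {A : Type} (l : lit A) a : lift_lit l = Pos a -> exists b, a = Orig b.
Proof. destruct l; simpl; intros H; inversion H; eauto. Qed.

Section Translation.

Variables (A : Type) (Rgen : list (frule A)) (Rpref : list (prule A)).
Variables (j : nat) (r : prule A).
Hypothesis Hjr : nth_error Rpref j = Some r.

Let fresh_head_in_trans_pref (a : eatom A) x :
  In x (translate Rgen Rpref) -> fst (fhead x) = Pos a -> (forall b, a <> Orig b) ->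
  exists j' r', nth_error Rpref j' = Some r' /\ In x (trans_pref j' r').
Proof.
  intros Hx Hhead Hfresh. apply in_translate in Hx as [[g [_ ->]]|Hx]; [|exact Hx].
  destruct (lift_lit_Pos (fst (fhead g)) a Hhead) as [b ->]. now destruct (Hfresh b).
Qed.

Let same_rule r' : nth_error Rpref j = Some r' -> r' = r.
Proof. congruence. Qed.

Let in_translate_of_trans_pref x : In x (trans_pref j r) -> In x (translate Rgen Rpref).
Proof. intros Hx. apply in_translate. right. eauto. Qed.

Lemma translate_defines_body x :
  In x (translate Rgen Rpref) /\ fst (fhead x) = Pos (BodyA j) <-> x = body_rule j r.
Proof.
  split.
  - intros [Hx Hhead].
    destruct (fresh_head_in_trans_pref _ x Hx Hhead) as [j' [r' [Hj' Hx']]];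
      [intros b; discriminate|].
    apply in_trans_pref in Hx'
      as [->|[[i [C [c [_ [_ ->]]]]]|[->| ->]]]; try discriminate.
    injection Hhead as ->. now rewrite (same_rule r').
  - intros ->. split; [|reflexivity].
    apply in_translate_of_trans_pref, in_trans_pref. auto.
Qed.

Lemma translate_defines_sat i x :
  In x (translate Rgen Rpref) /\ fst (fhead x) = Pos (SatA j i) <->
  exists c, In c (nth i (phead r) []) /\ x = sat_rule j i c.
Proof.
  split.
  - intros [Hx Hhead].
    destruct (fresh_head_in_trans_pref _ x Hx Hhead) as [j' [r' [Hj' Hx']]];
      [intros b; discriminate|].
    apply in_trans_pref in Hx'
      as [->|[[i' [C [c [HC [Hc ->]]]]]|[->| ->]]]; try discriminate.
    injection Hhead as -> <-. rewrite (same_rule r') in HC by assumption.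
    exists c. now rewrite (nth_error_nth _ _ _ HC).
  - intros [c [Hc ->]]. split; [|reflexivity].
    destruct (nth_error (phead r) i) as [C|] eqn:HC.
    + apply in_translate_of_trans_pref, in_trans_pref. right; left.
      exists i, C, c. rewrite (nth_error_nth _ _ _ HC) in Hc. auto.
    + apply nth_error_None in HC. now rewrite nth_overflow in Hc.
Qed.

Lemma translate_defines_irr x :
  In x (translate Rgen Rpref) /\ fst (fhead x) = Pos (SatIrr j) <->
  x = irr_inapplicable_rule j \/ x = irr_unsatisfied_rule j (length (phead r)).
Proof.
  split.
  - intros [Hx Hhead].
    destruct (fresh_head_in_trans_pref _ x Hx Hhead) as [j' [r' [Hj' Hx']]];
      [intros b; discriminate|].
    apply in_trans_pref in Hx'
      as [->|[[i [C [c [_ [_ ->]]]]]|[->| ->]]]; try discriminate;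
      injection Hhead as ->; rewrite ?(same_rule r' Hj'); auto.
  - intros Hx. split; [|now destruct Hx as [->| ->]].
    apply in_translate_of_trans_pref, in_trans_pref. tauto.
Qed.

Variables (I : finterp A) (I' : finterp (eatom A)).
Hypothesis HI' : fuzzy_answer_set (translate Rgen Rpref) I'.
Hypothesis Hcorr : corresponds I I'.

Lemma sat_conj_lift b : sat_conj I' (map lift_blit b) <-> sat_conj I b.
Proof.
  unfold sat_conj. rewrite Forall_map, !Forall_forall.
  split; intros H [l mu|l mu] Hb; specialize (H _ Hb); simpl in *;
    unfold sat_al, sat_nal in *; now rewrite Hcorr in *.
Qed.

Lemma body_atom_iff : sat_al I' (Pos (BodyA j)) 1 <-> sat_conj I (pbody r).
Proof.
  rewrite (answer_set_head_iff _ _ _ HI' _ _ _ translate_defines_body)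
    by (now intros x ->).
  rewrite <- sat_conj_lift. split; [now intros [x [-> Hx]]|]. intros Hb.
  exists (body_rule j r). auto.
Qed.

Lemma sat_atom_iff i : pref_sat_i I r i <-> sat_al I' (Pos (SatA j i)) 1.
Proof.
  rewrite (answer_set_head_iff _ _ _ HI' _ _ _ (translate_defines_sat i))
    by (now intros x [c [_ ->]]).
  unfold pref_sat_i, sat_dnf. rewrite Exists_exists. split.
  - intros [Hb [c [Hc Hsat]]]. exists (sat_rule j i c). split; [eauto|].
    simpl. rewrite sat_conj_app, sat_conj_singleton, sat_conj_lift.
    split; [exact Hsat|]. now apply body_atom_iff.
  - intros [x [[c [Hc ->]] Hsat]]. simpl in Hsat.
    rewrite sat_conj_app, sat_conj_singleton, sat_conj_lift in Hsat.
    destruct Hsat as [Hsat Hb]. split; [now apply body_atom_iff|eauto].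
Qed.

Lemma irr_atom_iff : pref_sat_irr I r <-> sat_al I' (Pos (SatIrr j)) 1.
Proof.
  rewrite (answer_set_head_iff _ _ _ HI' _ _ _ translate_defines_irr)
    by (now intros x [->| ->]).
  assert (Hunsat : sat_conj I' (fbody (irr_unsatisfied_rule j (length (phead r)))) <->
                   sat_conj I (pbody r) /\
                   forall k, (k < length (phead r))%nat -> ~ sat_dnf I (nth k (phead r) [])).
  { simpl. rewrite sat_conj_app, sat_conj_singleton, sat_conj_map_NotL.
    simpl. rewrite body_atom_iff.
    split; intros [H1 H2]; split; auto; intros k Hk.
    - intros Hd. apply (H1 k); [apply in_seq; lia|]. now apply sat_atom_iff.
    - apply in_seq in Hk. rewrite <- sat_atom_iff. intros [_ Hd].
      apply (H2 k); [lia|exact Hd]. }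
  assert (Hinapp : sat_conj I' (fbody (@irr_inapplicable_rule A j)) <->
                   ~ sat_conj I (pbody r)).
  { simpl. now rewrite sat_conj_singleton, <- body_atom_iff, <- sat_nal_iff. }
  unfold pref_sat_irr. split.
  - intros [Happ|Hnapp].
    + exists (irr_unsatisfied_rule j (length (phead r))).
      split; [now right|now apply Hunsat].
    + exists (irr_inapplicable_rule j). split; [now left|now apply Hinapp].
  - intros [x [[->| ->] Hsat]]; [right; now apply Hinapp|left; now apply Hunsat].
Qed.

End Translation.

Theorem theorem1 (A : Type) (Rgen : list (frule A)) (Rpref : list (prule A))
  (j : nat) (r : prule A) (i : nat) (I : finterp A) (I' : finterp (eatom A)) :
  wf_program Rgen Rpref ->
  nth_error Rpref j = Some r ->
  (i < length (phead r))%nat ->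
  fuzzy_answer_set_opt Rgen Rpref I ->
  fuzzy_answer_set (translate Rgen Rpref) I' ->
  corresponds I I' ->
  (pref_sat_i I r i <-> sat_al I' (Pos (SatA j i)) 1) /\
  (pref_sat_irr I r <-> sat_al I' (Pos (SatIrr j)) 1).
Proof.
  intros _ Hjr _ _ HI' Hcorr. split.
  - now apply (sat_atom_iff A Rgen Rpref j r).
  - now apply (irr_atom_iff A Rgen Rpref j r).
Qed.
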